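(* Let $\mathcal G$ be a network with input nodes $\iota_1,\dots,\iota_n$ and output node $o$ such that $o$ is downstream from every input node. Suppose the Jacobian $J$ of the admissible vector field is generic and all its self-couplings $f_{\sigma,x_\sigma}$ are not identically zero. Then $\det\langle H\rangle$ is not identically zero.
   Context: Node $b$ is downstream from $a$ if there is a directed path from $a$ to $b$. An admissible vector field assigns a real variable $x_j$ to each node, with $\dot x_{\iota_m}=f_{\iota_m}(X,\mathcal I)$ for input nodes and $\dot x_j=f_j(X)$ otherwise ($\mathcal I\in\mathbb R$ a single input parameter), smooth, with $f_{\iota_m,\mathcal I}=\partial f_{\iota_m}/\partial\mathcal I\neq0$. Writing $f_{\sigma_i,\sigma_j}=\partial f_{\sigma_i}/\partial x_{\sigma_j}$, the vector field (or its Jacobian $J=(f_{\sigma_i,\sigma_j})$) is generic if (a) $f_{\sigma_i,\sigma_j}\equiv0$ if and only if there is no arrow $\sigma_j\to\sigma_i$, and (b) there is no polynomial relation among the $f_{\sigma_i,\sigma_j}$ (so they may be regarded as algebraically independent variables). The generalized homeostasis matrix $\langle H\rangle$ is obtained from $J$ (nodes ordered with $o$ last) by replacing the last column by the column with $-f_{\iota_m,\mathcal I}$ in row $\iota_m$ and $0$ elsewhere. *)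

From HB Require Import structures.
From mathcomp Require Import all_boot all_order all_algebra.
From mathcomp Require Import fingraph.
From mathcomp Require Import mpoly.
Set Implicit Arguments. Unset Strict Implicit. Unset Printing Implicit Defensive.
Import GRing.Theory.
Local Open Scope ring_scope.

(* Nodes of the network: 'I_K with K = N.+1; the output node o is the last
   node ord_max ("nodes ordered with o last").
   adj a b  <=>  there is an arrow a -> b.
   The generic Jacobian and the input-sensitivities f_{iota,I} are encoded
   by indeterminates of the polynomial ring {mpoly R[K*K + K]}:
   - 'X_(lshift K (mxvec_index i j)) stands for f_{i,j} = df_i/dx_j,
   - 'X_(rshift (K*K) i)            stands for f_{i,I}  (i an input node). *)

Definition jvar (R : nzRingType) (K : nat) (i j : 'I_K) : {mpoly R[K * K + K]} :=
  'X_(lshift K (mxvec_index i j)).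

Definition ivar (R : nzRingType) (K : nat) (i : 'I_K) : {mpoly R[K * K + K]} :=
  'X_(rshift (K * K) i).

(* Generic Jacobian: entry (i,j) is an independent indeterminate when there
   is an arrow j -> i or when i = j (all self-couplings are nonzero),
   and is identically 0 otherwise. *)
Definition generic_jacobian (R : nzRingType) (N : nat) (adj : rel 'I_N.+1)
  : 'M[{mpoly R[N.+1 * N.+1 + N.+1]}]_N.+1 :=
  \matrix_(i, j) (if (i == j) || adj j i then jvar R i j else 0).

Definition gen_homeostasis_matrix (R : nzRingType) (N : nat) (adj : rel 'I_N.+1)
  (inputs : {set 'I_N.+1}) : 'M[{mpoly R[N.+1 * N.+1 + N.+1]}]_N.+1 :=
  \matrix_(i, j) (if j == ord_max then (if i \in inputs then - ivar R i else 0)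
                  else generic_jacobian R adj i j).

Definition downstream (N : nat) (adj : rel 'I_N.+1) (a b : 'I_N.+1) : bool :=
  connect adj a b.

From HB Require Import structures.
From mathcomp Require Import all_boot all_order all_algebra.
From mathcomp Require Import fingraph perm.
From mathcomp Require Import mpoly.
Set Implicit Arguments. Unset Strict Implicit. Unset Printing Implicit Defensive.
Local Open Scope ring_scope.
Import GRing.Theory.

(* Pick a simple directed path from an input node iota to o and close it into
   a cycle by the extra edge o -> iota.  The map sending each node of the cycle
   to its predecessor, and fixing every other node, is a permutation s with
   s iota = o, all of whose other moves follow arrows of the network.
   Specializing f_{i, s i} := 1 (a self-coupling when s i = i), f_{iota,I} := -1
   and every other indeterminate to 0 turns <H> into the permutation matrix of s, whose determinant is +-1;
   hence det <H> is a nonzero polynomial. *)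

Lemma prev_head (T : eqType) (x : T) (p : seq T) :
  uniq (x :: p) -> prev (x :: p) x = last x p.
Proof.
case/andP=> x_notin_p _.
by rewrite prev_nth mem_head memNindex // -[size p]/((size (x :: p)).-1) nth_last.
Qed.

Lemma connect_perm (T : finType) (e : rel T) (a b : T) : connect e a b ->
  exists2 s : {perm T}, s a = b & forall i, s i != b -> (s i == i) || e (s i) i.
Proof.
case/connectP=> p0 /shortenP[p e_p uniq_p _] ->.
pose c := a :: p.
have prev_inj : injective (prev c) := can_inj (next_prev uniq_p).
exists (perm prev_inj) => [|i]; rewrite permE; first exact: prev_head.
move=> prev_i_neq_last.
have [i_in_c | i_notin_c] := boolP (i \in c); last first.
  by rewrite prev_nth (negbTE i_notin_c) eqxx.
pose e' := [rel x y | e x y || (x == last a p) && (y == a)].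
have cycle_c : path.cycle e' c.
  by rewrite /= rcons_path (sub_path _ e_p) /= ?eqxx ?orbT // => x y /= ->.
have /orP[-> | /andP[prev_i_eq_last _]] := prev_cycle cycle_c i_in_c.
  by rewrite orbT.
by rewrite prev_i_eq_last in prev_i_neq_last.
Qed.

Lemma det_map_mx_neq0 (A B : comNzRingType) (f : {rmorphism A -> B}) n
    (M : 'M[A]_n) :
  \det (map_mx f M) != 0 -> \det M != 0.
Proof. by rewrite det_map_mx; apply: contra => /eqP->; rewrite rmorph0. Qed.

Section HomeostasisSpecialization.
Variables (R : comNzRingType) (N : nat).
Variables (adj : rel 'I_N.+1) (inputs : {set 'I_N.+1}).
Local Notation K := N.+1.

Definition jacobian_point (A : 'M[R]_K) (c : 'I_K -> R) : 'I_(K * K + K) -> R :=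
  fun k => match split k with inl m => mxvec A 0 m | inr i => c i end.

Lemma meval_jvar A c i j : meval (jacobian_point A c) (jvar R i j) = A i j.
Proof. by rewrite mevalXU /jacobian_point (unsplitK (inl _)) mxvecE. Qed.

Lemma meval_ivar A c i : meval (jacobian_point A c) (ivar R i) = c i.
Proof. by rewrite mevalXU /jacobian_point (unsplitK (inr _)). Qed.

Definition perm_point (s : 'S_K) (iota : 'I_K) : 'I_(K * K + K) -> R :=
  jacobian_point (perm_mx s) (fun i => - (i == iota)%:R).

Lemma map_gen_homeostasis_matrix_perm (s : 'S_K) (iota : 'I_K) :
    iota \in inputs -> s iota = ord_max ->
    (forall i, s i != ord_max -> (s i == i) || adj (s i) i) ->
  map_mx (meval (perm_point s iota)) (gen_homeostasis_matrix R adj inputs)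
  = perm_mx s.
Proof.
move=> iota_in s_iota s_path; apply/matrixP => i j.
rewrite !mxE; case: ifPn => [/eqP-> | j_neq_o].
  have -> : (s i == ord_max) = (i == iota).
    by rewrite -s_iota (inj_eq perm_inj).
  case: ifPn => [i_in | i_notin]; first by rewrite mevalN meval_ivar opprK.
  by rewrite meval0; case: eqP => // i_eq; rewrite i_eq iota_in in i_notin.
case: ifPn => [_ | no_arrow]; first by rewrite meval_jvar perm_mxEsub !mxE.
rewrite meval0; case: eqP => // s_i_eq; case/negP: no_arrow.
by rewrite eq_sym -s_i_eq s_path // s_i_eq.
Qed.

Lemma det_gen_homeostasis_matrix_neq0 (s : 'S_K) (iota : 'I_K) :
    iota \in inputs -> s iota = ord_max ->
    (forall i, s i != ord_max -> (s i == i) || adj (s i) i) ->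
  \det (gen_homeostasis_matrix R adj inputs) != 0.
Proof.
move=> iota_in s_iota s_path.
apply: (det_map_mx_neq0 (f := meval (perm_point s iota))).
by rewrite map_gen_homeostasis_matrix_perm // det_perm signr_eq0.
Qed.

End HomeostasisSpecialization.

Theorem propositionB3 (R : realFieldType) (N : nat) (adj : rel 'I_N.+1)
  (inputs : {set 'I_N.+1}) :
  inputs != set0 ->
  (forall iota, iota \in inputs -> downstream adj iota ord_max) ->
  \det (gen_homeostasis_matrix R adj inputs) != 0.
Proof.
move=> /set0Pn[iota iota_in] downstream_o.
have [s s_iota s_path] := connect_perm (downstream_o _ iota_in).
exact: det_gen_homeostasis_matrix_neq0 iota_in s_iota s_path.
Qed.
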